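(* For every $N\ge1$ and $m\ge1$, $w^{St}_{\mathfrak{so}(N)}((1,2,\dots,m))=\frac{(N-1)^m+1-N}{N}$ if $m$ is odd, and $=\frac{(N-1)^m-1+N^2}{N}$ if $m$ is even.
   Context: For $1\le i\le N$, $\bar i=N+1-i$, $F_{ij}=E_{ij}-E_{\bar j\bar i}$ ($E_{ij}$ matrix units), spanning $\mathfrak{so}(N)$; for $\alpha\in\mathbb{S}_m$, $w_{\mathfrak{so}(N)}(\alpha)=\sum_{i_1,\dots,i_m=1}^N F_{i_1i_{\alpha(1)}}\cdots F_{i_mi_{\alpha(m)}}\in U(\mathfrak{so}(N))$, and $w^{St}_{\mathfrak{so}(N)}(\alpha)=\frac1N\operatorname{Tr}\rho(w_{\mathfrak{so}(N)}(\alpha))$ with $\rho$ the standard $N$-dimensional matrix representation extended to $U(\mathfrak{so}(N))$. *)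

From mathcomp Require Import all_boot all_order all_algebra all_fingroup.
Set Implicit Arguments. Unset Strict Implicit. Unset Printing Implicit Defensive.
Import GRing.Theory.
Local Open Scope ring_scope.

(* Indices 1..N are represented 0-indexed by 'I_N; bar i = N+1-i becomes N-1-i. *)
Definition bar (N : nat) (i : 'I_N) : 'I_N := rev_ord i.

(* Image of F_{ij} = E_{ij} - E_{bar j, bar i} under the standard representation rho. *)
Definition Fmx (N : nat) (i j : 'I_N) : 'M[rat]_N :=
  delta_mx i j - delta_mx (bar j) (bar i).

(* rho(w_{so(N)}(alpha)) = sum over (i_1..i_m) of the ordered product
   F_{i_1 i_alpha(1)} ... F_{i_m i_alpha(m)} (rho is an algebra morphism). *)
Definition rho_w (N m : nat) (alpha : 'S_m) : 'M[rat]_N :=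
  \sum_(f : {ffun 'I_m -> 'I_N})
    foldr (fun k A => Fmx (f k) (f (alpha k)) *m A) 1%:M (enum 'I_m).

Definition wSt (N m : nat) (alpha : 'S_m) : rat :=
  (N%:R)^-1 * \tr (rho_w N alpha).

(* The cycle (1 2 ... m), 0-indexed: k |-> k+1 mod m. *)
Definition cycle_perm (m : nat) : 'S_m := perm (@ordS_inj m).

From mathcomp Require Import all_boot all_order all_algebra all_fingroup.
From mathcomp Require Import ring.
Import GRing.Theory Num.Theory.
Local Open Scope ring_scope.

(* For the cycle, rho(w) is the diagonal sum of the path sums
   Fpath n a b = sum_{c_1..c_n} F_{a c_1} F_{c_1 c_2} ... F_{c_n b}  (n = m - 1),
   and Fpath (n+1) a b = sum_c F_{a c} Fpath n c b.  Contracting F_{a c} against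
   E_{c b}, E_{bar b, bar c} and [c = b] I only produces these three shapes again,
   so Fpath n a b = x_n E_{a b} + y_n E_{bar b, bar a} + z_n [a = b] I with a linear
   recursion on (x_n, y_n, z_n), solved in closed form; the diagonal sum is then
   (x_n + y_n + N z_n) I, whose normalized trace is the claimed value. *)

Fixpoint nested_sum {T : finType} {V : zmodType} (n : nat) (Phi : seq T -> V) : V :=
  if n is n'.+1 then \sum_(c : T) nested_sum n' (fun s => Phi (c :: s)) else Phi [::].

Lemma sum_ffun_nested_sum (T : finType) (V : zmodType) n (Phi : seq T -> V) :
  \sum_(f : {ffun 'I_n -> T}) Phi (map f (enum 'I_n)) = nested_sum n Phi.
Proof.
elim: n Phi => [|n IHn] Phi /=.
  by rewrite enum_ord0 /= sumr_const card_ffun card_ord.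
pose cons_ffun (p : T * {ffun 'I_n -> T}) : {ffun 'I_n.+1 -> T} :=
  [ffun i => if unlift ord0 i is Some j then p.2 j else p.1].
pose uncons_ffun (f : {ffun 'I_n.+1 -> T}) := (f ord0, [ffun j => f (lift ord0 j)]).
have cons_ffunK : cancel cons_ffun uncons_ffun.
  case=> c g; rewrite /uncons_ffun ffunE unlift_none; congr (_, _).
  by apply/ffunP => j; rewrite !ffunE liftK.
have uncons_ffunK : cancel uncons_ffun cons_ffun.
  move=> f; apply/ffunP => i; rewrite ffunE.
  by case: unliftP => [j ->|->]; rewrite ?ffunE.
rewrite (reindex cons_ffun); last by exists uncons_ffun.
rewrite -(pair_bigA _ (fun c g => Phi (map (cons_ffun (c, g)) (enum 'I_n.+1)))).
apply: eq_bigr => c _; rewrite -IHn; apply: eq_bigr => g _.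
rewrite enum_ordSl /= -map_comp ffunE unlift_none.
by congr (Phi (_ :: _)); apply: eq_map => j /=; rewrite ffunE liftK.
Qed.

Lemma mulmx_nested_sumr (T : finType) (R : pzRingType) k n (A : 'M[R]_k)
    (Phi : seq T -> 'M[R]_k) :
  nested_sum n (fun s => A *m Phi s) = A *m nested_sum n Phi.
Proof.
elim: n Phi => [|n IHn] Phi //=.
by rewrite mulmx_sumr; apply: eq_bigr => c _; apply: IHn.
Qed.

Lemma val_iter_cycle_perm n i : val (iter i (cycle_perm n.+1) ord0) = (i %% n.+1)%N.
Proof.
elim: i => [|i IHi] /=; first by rewrite mod0n.
by rewrite permE /= IHi -addn1 modnDml addn1.
Qed.

Lemma enum_ord_traject n : enum 'I_n.+1 = traject (cycle_perm n.+1) ord0 n.+1.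
Proof.
apply: (inj_map val_inj); rewrite val_enum_ord.
apply: (@eq_from_nth _ 0%N); first by rewrite size_map size_traject size_iota.
move=> i; rewrite size_iota => lt_i_n.
rewrite nth_iota // (nth_map ord0) ?size_traject // nth_traject //.
by rewrite val_iter_cycle_perm modn_small.
Qed.

Lemma sum_mulrb_eq (V : nmodType) (I : finType) (x : I) (G : I -> V) :
  \sum_(c : I) G c *+ (c == x) = G x.
Proof. by rewrite (bigD1 x) //= eqxx mulr1n big1 ?addr0 // => c /negbTE ->. Qed.

Section SoN.

Variable N : nat.
Implicit Types (a b c : 'I_N) (s : seq 'I_N).

Lemma barK : involutive (@bar N).
Proof. exact: rev_ordK. Qed.

Lemma eq_bar a b : (bar a == bar b) = (a == b).
Proof. exact: (inj_eq (@rev_ord_inj N)). Qed.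

Fixpoint Fword b s : 'M[rat]_N :=
  if s is c :: s' then Fmx c (head b s') *m Fword b s' else 1%:M.

Lemma foldr_Fmx_Fword (I : eqType) (g : I -> I) (f : I -> 'I_N) (k0 k : I) rest :
  fpath g k rest -> g (last k rest) = k0 ->
  foldr (fun k A => Fmx (f k) (f (g k)) *m A) 1%:M (k :: rest)
  = Fword (f k0) (map f (k :: rest)).
Proof.
elim: rest k => [|k' rest IHrest] k /=; first by move=> _ <-.
move=> /andP[/eqP <- path_rest] last_rest.
by have /= -> := IHrest (g k) path_rest last_rest.
Qed.

Lemma cycle_foldr_Fword n (f : 'I_n.+1 -> 'I_N) :
  foldr (fun k A => Fmx (f k) (f (cycle_perm n.+1 k)) *m A) 1%:M (enum 'I_n.+1)
  = Fword (f ord0) (map f (enum 'I_n.+1)).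
Proof.
rewrite enum_ord_traject; apply: foldr_Fmx_Fword; first exact: fpath_traject.
apply: val_inj; rewrite last_traject /= -/(iter n.+1 _ _) val_iter_cycle_perm.
by rewrite modnn.
Qed.

Fixpoint Fpath n a b : 'M[rat]_N :=
  if n is n'.+1 then \sum_c Fmx a c *m Fpath n' c b else Fmx a b.

Lemma nested_sum_Fword n a b : nested_sum n (fun s => Fword b (a :: s)) = Fpath n a b.
Proof.
elim: n a => [|n IHn] a /=; first by rewrite mulmx1.
by apply: eq_bigr => c _; rewrite -IHn -mulmx_nested_sumr.
Qed.

Lemma rho_w_cycle n : rho_w N (cycle_perm n.+1) = \sum_a Fpath n a a.
Proof.
pose Phi s : 'M[rat]_N := if s is a :: _ then Fword a s else 0.
transitivity (\sum_(f : {ffun 'I_n.+1 -> 'I_N}) Phi (map f (enum 'I_n.+1))).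
  by apply: eq_bigr => f _; rewrite cycle_foldr_Fword enum_ordSl.
by rewrite sum_ffun_nested_sum; apply: eq_bigr => a _; apply: nested_sum_Fword.
Qed.

Lemma sum_Fmx_mul_delta a b :
  \sum_c Fmx a c *m delta_mx c b = (N%:R - 1) *: delta_mx a b.
Proof.
under eq_bigr do rewrite mulmxBl mul_delta_mx mul_delta_mx_cond eq_sym.
rewrite sumrB sumr_const card_ord sum_mulrb_eq barK.
by rewrite scalerBl scale1r scaler_nat.
Qed.

Lemma sum_delta_bar : \sum_a delta_mx (bar a) (bar a) = 1%:M :> 'M[rat]_N.
Proof.
rewrite (reindex_inj (@rev_ord_inj N)) (mx1_sum_delta _ N).
by apply: eq_bigr => a _; rewrite -/(bar _) barK.
Qed.

Lemma sum_Fmx_mul_delta_bar a b :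
  \sum_c Fmx a c *m delta_mx (bar b) (bar c) = delta_mx a b - 1%:M *+ (a == b).
Proof.
under eq_bigr do rewrite mulmxBl !mul_delta_mx_cond eq_bar.
by rewrite sumrB sum_mulrb_eq barK sumrMnl sum_delta_bar.
Qed.

Lemma sum_Fmx_mul_eq a b : \sum_c Fmx a c *m (1%:M *+ (c == b)) = Fmx a b.
Proof.
under eq_bigr do rewrite (raddfMn (mulmx _)) /= mulmx1.
exact: sum_mulrb_eq.
Qed.

Definition Fcomb (x y z : rat) a b : 'M[rat]_N :=
  x *: delta_mx a b + y *: delta_mx (bar b) (bar a) + z *: (1%:M *+ (a == b)).

Lemma sum_Fmx_mul_Fcomb x y z a b :
  \sum_c Fmx a c *m Fcomb x y z c b = Fcomb ((N%:R - 1) * x + y + z) (- z) (- y) a b.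
Proof.
under eq_bigr do rewrite !mulmxDr -!scalemxAr.
rewrite !big_split /= -!scaler_sumr sum_Fmx_mul_delta sum_Fmx_mul_delta_bar.
rewrite sum_Fmx_mul_eq /Fcomb /Fmx.
by apply/matrixP => i j; rewrite !mxE; ring.
Qed.

Fixpoint Fcoef n : rat * rat * rat :=
  if n is n'.+1 then
    let: (x, y, z) := Fcoef n' in ((N%:R - 1) * x + y + z, - z, - y)
  else (1, -1, 0).

Lemma Fpath_Fcomb n a b : Fpath n a b = let: (x, y, z) := Fcoef n in Fcomb x y z a b.
Proof.
elim: n a b => [|n IHn] a b /=.
  by rewrite /Fcomb /Fmx scale1r scaleN1r scale0r addr0.
under eq_bigr do rewrite IHn.
by case: (Fcoef n) => [[x y] z]; rewrite sum_Fmx_mul_Fcomb.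
Qed.

Lemma sum_diag_Fcomb x y z : \sum_a Fcomb x y z a a = (x + y + z * N%:R)%:M.
Proof.
rewrite !big_split /= -!scaler_sumr sum_delta_bar -mx1_sum_delta.
under eq_bigr do rewrite eqxx mulr1n.
by rewrite sumr_const card_ord -scaler_nat scalerA -!scalerDl scalemx1.
Qed.

Lemma Fcoef_yz n :
  ((Fcoef n).1.2 = if odd n then 0 else -1) /\ ((Fcoef n).2 = if odd n then 1 else 0).
Proof.
elim: n => [|n IHn] //=.
case: (Fcoef n) IHn => [[x y] z] /= [-> ->].
by case: (odd n); rewrite /= ?oppr0 ?opprK.
Qed.

Lemma Fcoef_x n :
  N%:R * (Fcoef n).1.1 = (N%:R - 1) ^+ n.+1 + (if odd n then -1 else 1).
Proof.
elim: n => [|n IHn] /=; first by rewrite mulr1 subrK.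
have [] := Fcoef_yz n.
case: (Fcoef n) IHn => [[x y] z] /= IHn -> ->.
rewrite exprS.
have -> : (N%:R - 1) ^+ n.+1 = N%:R * x - (if odd n then -1 else 1).
  by rewrite IHn addrK.
by case: (odd n) => /=; ring.
Qed.

End SoN.

Theorem corollary13 (N m : nat) (hN : (1 <= N)%N) (hm : (1 <= m)%N) :
  wSt N (cycle_perm m) =
  (if odd m then (((N%:R - 1) ^+ m + 1 - N%:R) / N%:R : rat)
   else (((N%:R - 1) ^+ m - 1 + N%:R ^+ 2) / N%:R : rat)).
Proof.
case: m hm => [//|n] _.
have N_neq0 : (N%:R : rat) != 0 by rewrite pnatr_eq0 -lt0n.
rewrite /wSt rho_w_cycle.
under eq_bigr do rewrite Fpath_Fcomb.
have Nx := Fcoef_x N n; have [] := Fcoef_yz N n.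
case: (Fcoef N n) Nx => [[x y] z] /= Nx -> ->.
rewrite sum_diag_Fcomb mxtrace_scalar -[x](mulKf N_neq0) Nx.
by case: (odd n); rewrite /= -mulr_natr; field.
Qed.
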